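(* Let $G$ be a compact group with Haar probability measure $dg$, acting linearly and continuously on a finite-dimensional real vector space $V$. Fix $v\in V$ and a linear function $\ell:V\to\mathbb{R}$, and let $f(g)=\ell(gv)$. For a positive integer $k$, let $$D_k=\dim \operatorname{span}\{g v^{\otimes k}: g\in G\}$$ be the dimension of the linear span of the orbit of $v^{\otimes k}$ in $V^{\otimes k}$. Then $$\|f\|_{2k}\le \|f\|_\infty\le D_k^{1/(2k)}\,\|f\|_{2k}.$$
   Context: $V^{\otimes k}$ is the $k$-th tensor power of $V$, with $G$ acting diagonally: $g(v_1\otimes\cdots\otimes v_k)=gv_1\otimes\cdots\otimes gv_k$; $v^{\otimes k}=v\otimes\cdots\otimes v$ ($k$ factors). For $f:G\to\mathbb{R}$, $\|f\|_\infty=\max_{g\in G}|f(g)|$ and $\|f\|_{2k}=\left(\int_G f^{2k}(g)\,dg\right)^{1/(2k)}$. *)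

From HB Require Import structures.
From mathcomp Require Import all_boot all_order all_algebra.
From mathcomp Require Import all_classical all_reals all_analysis.
Set Implicit Arguments. Unset Strict Implicit. Unset Printing Implicit Defensive.
Import Order.TTheory GRing.Theory Num.Theory.
Import numFieldTopology.Exports numFieldNormedType.Exports.
Local Open Scope classical_set_scope.
Local Open Scope ring_scope.

Definition borel_of (G : ptopologicalType) := g_sigma_algebraType (@open G).

Record compact_group (G : ptopologicalType) (mul : G -> G -> G) (inv : G -> G)
    (e : G) : Prop := CompactGroup {
  cg_mulA : associative mul;
  cg_mul1g : left_id e mul;
  cg_mulVg : forall x, mul (inv x) x = e;
  cg_mul_cont : continuous (fun p : G * G => mul p.1 p.2);
  cg_inv_cont : continuous inv;
  cg_hausdorff : hausdorff_space G;
  cg_compact : compact [set: G] }.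

Definition haar_probability (R : realType) (G : ptopologicalType)
    (mul : G -> G -> G) (mu : probability (borel_of G) R) : Prop :=
  forall (g : G) (A : set (borel_of G)), measurable A ->
    mu (mul g @^-1` A) = mu A.

Definition cont_lin_action (R : realType) (G : ptopologicalType)
    (mul : G -> G -> G) (e : G) (n : nat) (rho : G -> 'M[R]_n) : Prop :=
  [/\ forall g h, rho (mul g h) = rho g *m rho h,
      rho e = 1%:M &
      continuous (fun p : G * 'cV[R]_n => rho p.1 *m p.2)].

(* The k-th tensor power V^{(x)k} of V = R^n, with the standard basis
   indexed by k-tuples of indices. *)
Definition tensor_pow (R : realType) (n k : nat) :=
  {ffun k.-tuple 'I_n -> R^o}.

Definition tpow (R : realType) (n k : nat) (w : 'cV[R]_n) : tensor_pow R n k :=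
  [ffun i : k.-tuple 'I_n => \prod_(j < k) w (tnth i j) ord0].

Definition tact (R : realType) (G : Type) (n k : nat) (rho : G -> 'M[R]_n)
    (g : G) (v : 'cV[R]_n) : tensor_pow R n k :=
  tpow k (rho g *m v).

Definition is_orbit_span (R : realType) (G : Type) (n k : nat)
    (rho : G -> 'M[R]_n) (v : 'cV[R]_n) (U : {vspace tensor_pow R n k}) : Prop :=
  (forall g, tact k rho g v \in U) /\
  (forall W : {vspace tensor_pow R n k},
      (forall g, tact k rho g v \in W) -> (U <= W)%VS).

(* ||f||_infty = max_{g in G} |f g| (as a supremum; it is attained when f is
   continuous and G compact). *)
Definition sup_norm (R : realType) (G : Type) (f : G -> R) : R :=
  sup [set `|f g| | g in [set: G]].

Definition norm2k (R : realType) (G : ptopologicalType)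
    (mu : probability (borel_of G) R) (k : nat) (f : G -> R) : R :=
  powR (fine (\int[mu]_(g in [set: borel_of G]) ((f g) ^+ (2 * k))%:E))
       ((2 * k)%:R^-1).

(* Let P be the space of functions g |-> <a, g v^(x)k> on G. It consists of
   continuous functions, is stable under left translations and contains f^k,
   and an L^2(dg)-orthonormal family in P has at most D_k members, as these
   functions only see the tensor a through its pairing with the orbit span.
   For a maximal orthonormal family (s_i)_{i<m} of P every phi in P equals
   its expansion, so phi(g)^2 <= K(g) ||phi||_2^2 with K = sum_i s_i^2 by
   Cauchy-Schwarz. Applied to the translates of the s_i this shows that K is
   minimal everywhere, hence equal to its mean m <= D_k. For phi = f^k this
   is |f(g)|^(2k) <= D_k ||f||_(2k)^(2k); the other inequality only uses
   that dg is a probability measure. *)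

From HB Require Import structures.
From mathcomp Require Import all_boot all_order all_algebra.
From mathcomp Require Import all_classical all_reals all_analysis.
From mathcomp Require Import measurable_realfun ring.
Set Implicit Arguments. Unset Strict Implicit. Unset Printing Implicit Defensive.
Import Order.TTheory GRing.Theory Num.Theory.
Import numFieldTopology.Exports numFieldNormedType.Exports.
Local Open Scope classical_set_scope.
Local Open Scope ring_scope.

Section BorelContinuous.
Context (G : ptopologicalType).

Lemma borel_open (A : set G) : open A -> measurable (A : set (borel_of G)).
Proof. by move=> oA; apply: sub_sigma_algebra. Qed.

Lemma continuous_borel_measurable (R : realType) (f : G -> R) : continuous f ->
  measurable_fun (setT : set (borel_of G)) f.
Proof.
move=> cf; apply: (measurability _ (RGenOpens.measurableE R)).
move=> _ [_ [a [b ->]] <-]; rewrite setTI; apply: borel_open.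
by apply: (proj1 (continuousP f) cf); exact: interval_open.
Qed.

Lemma continuous_borel_measurable_map (f : G -> G) : continuous f ->
  measurable_fun (setT : set (borel_of G)) (f : borel_of G -> borel_of G).
Proof.
move=> cf; apply: (@measurability _ _ (borel_of G) (borel_of G) _ _ (@open G)) => //.
move=> _ [A oA <-]; rewrite setTI; apply: borel_open.
exact: (proj1 (continuousP f) cf).
Qed.

End BorelContinuous.

Section ContinuousReal.
Context (T : topologicalType) (R : realType).
Implicit Types f g : T -> R.

Lemma continuous_mul f g : continuous f -> continuous g ->
  continuous (fun x => f x * g x).
Proof. by move=> cf cg x; exact: (@continuousM R T f g x (cf x) (cg x)). Qed.

Lemma continuous_exprn f n : continuous f -> continuous (fun x => f x ^+ n).
Proof.
by move=> cf x; exact: (continuous_comp (cf x) (@exprn_continuous R n (f x))).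
Qed.

End ContinuousReal.

Section CompactIntegration.
Context (R : realType) (G : ptopologicalType) (mu : probability (borel_of G) R).
Hypothesis cG : compact [set: G].
Implicit Types (f g : G -> R) (c : R).

Lemma continuous_bounded f : continuous f -> exists M, forall x, `|f x| <= M.
Proof.
move=> cf; have : compact (f @` [set: G]).
  by apply: continuous_compact => //; exact: continuous_subspaceT.
move=> /(@compact_bounded R R^o) [M [_ fM]]; exists (`|M| + 1) => x.
by apply: fM; [rewrite (le_lt_trans (ler_norm M)) ?ltrDl | exists x].
Qed.

Lemma continuous_integrable f : continuous f -> mu.-integrable setT (EFin \o f).
Proof.
move=> cf; have [M fM] := continuous_bounded cf.
apply: measurable_bounded_integrable => //.
- by have /= -> := probability_setT mu; rewrite ltry.
- exact: continuous_borel_measurable.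
exists M; split; first exact: num_real.
by move=> x Mx y _; exact: le_trans (fM y) (ltW Mx).
Qed.

Lemma Rintegral_cst_probability c : \int[mu]_x c = c.
Proof.
by rewrite Rintegral_cst //; have /= -> := probability_setT mu; rewrite mulr1.
Qed.

Lemma RintegralD_continuous f g : continuous f -> continuous g ->
  \int[mu]_x (f x + g x) = \int[mu]_x f x + \int[mu]_x g x.
Proof. by move=> cf cg; apply: RintegralD => //; exact: continuous_integrable. Qed.

Lemma RintegralZl_continuous c f : continuous f ->
  \int[mu]_x (c * f x) = c * \int[mu]_x f x.
Proof. by move=> cf; apply: RintegralZl => //; exact: continuous_integrable. Qed.

Lemma Rintegral_sum_continuous (I : Type) (r : seq I) (F : I -> G -> R) :
  (forall i, continuous (F i)) ->
  \int[mu]_x (\sum_(i <- r) F i x) = \sum_(i <- r) \int[mu]_x F i x.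
Proof.
move=> cF; elim: r => [|i r IHr].
  by under eq_Rintegral do rewrite big_nil; rewrite big_nil Rintegral_cst_probability.
under eq_Rintegral do rewrite big_cons.
rewrite big_cons -IHr RintegralD_continuous //.
by apply: continuous_big => [|j _]; [exact: add_continuous | exact: cF].
Qed.

Lemma le_Rintegral_continuous f g : continuous f -> continuous g ->
  (forall x, f x <= g x) -> \int[mu]_x f x <= \int[mu]_x g x.
Proof. by move=> cf cg fg; apply: le_Rintegral => //; exact: continuous_integrable. Qed.

End CompactIntegration.

Section GroupLaws.
Context (G : Type) (mul : G -> G -> G) (inv : G -> G) (e : G).
Hypotheses (mulA : associative mul) (mul1g : left_id e mul)
  (mulVg : forall x, mul (inv x) x = e).

Lemma mulgV_laws x : mul x (inv x) = e.
Proof.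
have mulVK : mul (inv x) (mul x (inv x)) = inv x by rewrite mulA mulVg mul1g.
by rewrite -[mul x _]mul1g -(mulVg (inv x)) -mulA mulVK.
Qed.

Lemma mulgVK_laws x y : mul (mul x (inv y)) y = x.
Proof.
have mulg1 z : mul z e = z by rewrite -(mulVg z) mulA mulgV_laws mul1g.
by rewrite -mulA mulVg mulg1.
Qed.
End GroupLaws.

Section HaarProbability.
Context (R : realType) (G : ptopologicalType) (mu : probability (borel_of G) R).
Context (mul : G -> G -> G) (inv : G -> G) (e : G).
Hypotheses (CG : compact_group mul inv e) (HH : haar_probability mul mu).

Lemma cg_mulgVK x y : mul (mul x (inv y)) y = x.
Proof. exact: mulgVK_laws (cg_mulA CG) (cg_mul1g CG) (cg_mulVg CG) x y. Qed.

Lemma mul_continuousl h : continuous (mul h).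
Proof.
move=> x; apply: (@continuous_comp _ _ _ (pair h) (fun p : G * G => mul p.1 p.2)).
  exact: (cvg_pair (cvg_cst h) cvg_id).
exact: (cg_mul_cont CG).
Qed.

Lemma Rintegral_mull h (psi : G -> R) : continuous psi ->
  \int[mu]_g psi (mul h g) = \int[mu]_g psi g.
Proof.
move=> cpsi; congr fine.
have mh := continuous_borel_measurable_map (@mul_continuousl h).
rewrite -[LHS]/(\int[mu]_(x in mul h @^-1` setT) ((EFin \o psi) \o mul h) x)%E.
rewrite -(@integral_pushforward _ _ _ _ R _ mh mu setT (EFin \o psi)) //.
- by apply: eq_measure_integral => A mA _; exact: HH.
- by apply/measurable_EFinP; exact: continuous_borel_measurable.
- apply: (@continuous_integrable _ _ mu (cg_compact CG) (psi \o mul h)) => x.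
  exact: continuous_comp (@mul_continuousl h x) (cpsi _).
Qed.

(* Finitely many left translates of a nonempty open set cover the compact
   group, so by invariance they cannot all be null. *)
Lemma haar_open_gt0 (O : set G) o : open O -> O o -> (0 < mu O)%E.
Proof.
move=> oO Oo; rewrite lt0e measure_ge0 andbT; apply/negP => /eqP muO0.
have cover_translates : [set: G] `<=` cover [set: G] (fun x => mul x @^-1` O).
  by move=> y _; exists (mul o (inv y)) => //=; rewrite cg_mulgVK.
have := cg_compact CG; rewrite compact_cover => /(_ G [set: G] _
  (fun x _ => proj1 (continuousP _) (@mul_continuousl x) O oO) cover_translates).
move=> [D _ coverD].
pose s := finmap.enum_fset D.
pose F i : set (borel_of G) := mul (nth o s i) @^-1` O.
have F_null i : mu.-negligible (F i).
  exists (F i); split => //; last by rewrite /F HH //; exact: borel_open.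
  have := continuous_borel_measurable_map (@mul_continuousl (nth o s i)).
  by move=> /(_ measurableT O (borel_open oO)); rewrite setTI.
have [N [_ muN0 FN]] := negligible_bigcup F_null.
suff NT : N = setT.
  by have /eqP := probability_setT mu; rewrite -NT muN0 eq_sym eqe oner_eq0.
apply/seteqP; split => // y _; apply: FN.
have [x Dx yx] := coverD y I.
by exists (index x s) => //; rewrite /F nth_index.
Qed.

Lemma continuous_Rintegral_eq0 (psi : G -> R) : continuous psi ->
  (forall g, 0 <= psi g) -> \int[mu]_g psi g = 0 -> forall g, psi g = 0.
Proof.
move=> cpsi psi_ge0 int0 h; apply/eqP; rewrite eq_le psi_ge0 andbT leNgt.
apply/negP => psih_gt0.
pose c := psi h / 2.
have c_gt0 : 0 < c by rewrite divr_gt0.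
pose O := psi @^-1` [set y | c < y].
have oO : open O := proj1 (continuousP _) cpsi _ (@open_gt R c).
have Oh : O h by rewrite /O /= /c ltr_pdivrMr // ltr_pMr // ltr1n.
have mO : measurable (O : set (borel_of G)) := borel_open oO.
have intpsi := continuous_integrable mu (cg_compact CG) cpsi.
have c_muO_le : (c%:E * mu O <= \int[mu]_(x in setT) (EFin \o psi) x)%E.
  rewrite -(setIT O) -integral_indic // -ge0_integralZl_EFin //; last 2 first.
  - by apply/measurable_EFinP; exact: measurable_indic.
  - exact: ltW.
  apply: ge0_le_integral => //.
  - by move=> x _; rewrite lee_fin mulr_ge0 ?(ltW c_gt0).
  - by apply/measurable_EFinP; apply: measurable_funM => //; exact: measurable_indic.
  - by apply/measurable_EFinP; exact: continuous_borel_measurable.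
  - move=> x _; rewrite lee_fin indicE.
    by case: (boolP (x \in O)) => [/set_mem /ltW|_]; rewrite ?mulr1 ?mulr0.
have c_muO_gt0 : (0 < c%:E * mu O)%E.
  by rewrite mule_gt0 ?lte_fin ?(haar_open_gt0 oO Oh).
have := lt_le_trans c_muO_gt0 c_muO_le.
rewrite -(fineK (integrable_fin_num measurableT intpsi)) -/(Rintegral _ _ _).
by rewrite int0 ltxx.
Qed.

End HaarProbability.

Lemma sqr_sum_mul_le (R : realFieldType) (I : finType) (x y : I -> R) :
  (\sum_i x i * y i) ^+ 2 <= (\sum_i x i ^+ 2) * (\sum_i y i ^+ 2).
Proof.
set p := \sum_i x i ^+ 2; set q := \sum_i y i ^+ 2; set s := \sum_i x i * y i.
have q_ge0 : 0 <= q by apply: sumr_ge0 => i _; exact: sqr_ge0.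
have [q_gt0|] := ltP 0 q; last first.
  move=> q_le0; have q0 : q = 0 by apply/eqP; rewrite eq_le q_le0 q_ge0.
  have y0 i : y i = 0.
    apply/eqP; rewrite -sqrf_eq0; apply/eqP.
    by move/psumr_eq0P: q0; apply=> // j _; exact: sqr_ge0.
  by rewrite /s big1 ?q0 ?mulr0 ?expr0n // => i _; rewrite y0 mulr0.
have : 0 <= \sum_i (q * x i - s * y i) ^+ 2 by apply: sumr_ge0 => i _; exact: sqr_ge0.
have expand i : (q * x i - s * y i) ^+ 2 =
    q ^+ 2 * x i ^+ 2 + - (2 * q * s) * (x i * y i) + s ^+ 2 * y i ^+ 2 by ring.
rewrite (eq_bigr _ (fun i _ => expand i)) !big_split /= -!mulr_sumr -/p -/q -/s.
have -> : q ^+ 2 * p + - (2 * q * s) * s + s ^+ 2 * q = q * (p * q - s ^+ 2) by ring.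
by rewrite pmulr_rge0 // subr_ge0.
Qed.

Lemma sum_mul_delta (R : pzSemiRingType) m (c : 'I_m -> R) j (jm : (j < m)%N) :
  \sum_(i < m) c i * ((i : nat) == j)%:R = c (Ordinal jm).
Proof.
rewrite (bigD1 (Ordinal jm)) //= eqxx mulr1 big1 ?addr0 // => i ij.
by rewrite -[j]/(nat_of_ord (Ordinal jm)) val_eqE (negbTE ij) mulr0.
Qed.

Section L2Inner.
Context (R : realType) (G : ptopologicalType) (mu : probability (borel_of G) R).
Implicit Types (f g : G -> R) (c : R).

Definition dotL2 f g := \int[mu]_x (f x * g x).

Definition orthonormal (P : (G -> R) -> Prop) m (s : nat -> G -> R) :=
  (forall i, P (s i)) /\
  (forall i j, (i < m)%N -> (j < m)%N -> dotL2 (s i) (s j) = (i == j)%:R).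

Lemma dotL2C f g : dotL2 f g = dotL2 g f.
Proof. by apply: eq_Rintegral => x _; rewrite mulrC. Qed.

Lemma dotL2_ge0 f : 0 <= dotL2 f f.
Proof. by apply: Rintegral_ge0 => x _; rewrite -expr2 sqr_ge0. Qed.

Hypothesis cG : compact [set: G].

Lemma dotL2Zl c f g : continuous f -> continuous g ->
  dotL2 (fun x => c * f x) g = c * dotL2 f g.
Proof.
move=> cf cg; rewrite /dotL2 -RintegralZl_continuous //; last exact: continuous_mul.
by apply: eq_Rintegral => x _; rewrite mulrA.
Qed.

Lemma dotL2_linl f1 f2 g c : continuous f1 -> continuous f2 -> continuous g ->
  dotL2 (fun x => f1 x + c * f2 x) g = dotL2 f1 g + c * dotL2 f2 g.
Proof.
move=> cf1 cf2 cg; rewrite -dotL2Zl // /dotL2 -RintegralD_continuous //.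
- by apply: eq_Rintegral => x _; rewrite mulrDl.
- exact: continuous_mul.
- by apply: continuous_mul => //; apply: continuous_mul => //; exact: cst_continuous.
Qed.

Lemma dotL2_suml (I : Type) (r : seq I) (a : I -> R) (F : I -> G -> R) g :
  (forall i, continuous (F i)) -> continuous g ->
  dotL2 (fun x => \sum_(i <- r) a i * F i x) g = \sum_(i <- r) a i * dotL2 (F i) g.
Proof.
move=> cF cg; rewrite /dotL2.
under eq_Rintegral do rewrite mulr_suml.
rewrite Rintegral_sum_continuous //; last first.
  move=> i; apply: continuous_mul => //.
  by apply: continuous_mul => //; exact: cst_continuous.
apply: eq_bigr => i _; rewrite -RintegralZl_continuous //; last exact: continuous_mul.
by apply: eq_Rintegral => x _; rewrite mulrA.
Qed.

End L2Inner.

Section ReproducingKernel.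
Context (R : realType) (G : ptopologicalType) (mu : probability (borel_of G) R).
Context (mul : G -> G -> G) (inv : G -> G) (e : G).
Hypotheses (CG : compact_group mul inv e) (HH : haar_probability mul mu).
Variable P : (G -> R) -> Prop.
Hypotheses (P_continuous : forall f, P f -> continuous f)
  (P_lin : forall f g c, P f -> P g -> P (fun x => f x + c * g x))
  (P0 : P (fun=> 0))
  (P_mull : forall h f, P f -> P (fun x => f (mul h x))).
Variable D : nat.
Hypothesis orthonormal_le : forall m s, orthonormal mu P m s -> (m <= D)%N.

Let cG := cg_compact CG.

Lemma P_scale c f : P f -> P (fun x => c * f x).
Proof.
by move=> Pf; have := P_lin c P0 Pf; under eq_fun do rewrite add0r.
Qed.

Lemma P_sum (I : Type) (r : seq I) (a : I -> R) (F : I -> G -> R) :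
  (forall i, P (F i)) -> P (fun x => \sum_(i <- r) a i * F i x).
Proof.
move=> PF; elim: r => [|i r IHr]; first by under eq_fun do rewrite big_nil.
under eq_fun do rewrite big_cons addrC.
exact: P_lin.
Qed.

Lemma orthonormal_extend m s t : orthonormal mu P m s -> P t ->
  dotL2 mu t t = 1 -> (forall j, (j < m)%N -> dotL2 mu t (s j) = 0) ->
  orthonormal mu P m.+1 (fun i => if i == m then t else s i).
Proof.
move=> [Ps dot_s] Pt dot_tt dot_ts; split=> [i|i j]; first by case: (i == m).
rewrite !ltnS => im jm.
have [->|nim] := eqVneq i m; have [jm'|njm] := eqVneq j m.
- by rewrite dot_tt.
- by rewrite dot_ts // ltn_neqAle njm.
- by rewrite jm' (negbTE nim) dotL2C dot_ts // ltn_neqAle nim.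
- by rewrite dot_s // ltn_neqAle ?nim ?njm.
Qed.

Lemma exists_maximal_orthonormal :
  exists m s, orthonormal mu P m s /\ forall s', ~ orthonormal mu P m.+1 s'.
Proof.
pose Q m := `[< exists s, orthonormal mu P m s >].
have Q0 : exists m, Q m by exists 0%N; apply/asboolP; exists (fun _ _ => 0).
have Q_le m : Q m -> (m <= D)%N by move=> /asboolP [s]; exact: orthonormal_le.
case: (ex_maxnP Q0 Q_le) => m /asboolP [s ONs] Q_max.
exists m, s; split => // s' ONs'.
by have := Q_max m.+1 (asboolT (ex_intro _ s' ONs')); rewrite ltnn.
Qed.

Section MaximalFamily.
Variables (m : nat) (s : nat -> G -> R).
Hypotheses (ONs : orthonormal mu P m s)
  (s_max : forall s', ~ orthonormal mu P m.+1 s').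

Let Ps : forall i, P (s i) := proj1 ONs.
Let dot_s := proj2 ONs.
Let cs i : continuous (s i) := P_continuous (Ps i).

(* The residual of [f] is orthogonal to the [s i]; normalised, it would
   extend the family, so it has norm 0 and vanishes by full support. *)
Lemma orthonormal_expansion f : P f ->
  forall g, f g = \sum_(i < m) dotL2 mu f (s i) * s i g.
Proof.
move=> Pf; pose r x := f x + (-1) * \sum_(i < m) dotL2 mu f (s i) * s i x.
have Pr : P r by apply: P_lin => //; exact: P_sum.
have [cf cr] := (P_continuous Pf, P_continuous Pr).
have r_orth j : (j < m)%N -> dotL2 mu r (s j) = 0.
  move=> jm; rewrite dotL2_linl ?dotL2_suml //; last exact/P_continuous/P_sum.
  under eq_bigr => i _ do rewrite dot_s //.
  by rewrite sum_mul_delta mulN1r subrr.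
have rr0 : dotL2 mu r r = 0.
  apply/eqP; rewrite eq_le dotL2_ge0 andbT leNgt; apply/negP => rr_gt0.
  pose a := (Num.sqrt (dotL2 mu r r))^-1.
  have ct := P_continuous (P_scale a Pr).
  apply: (s_max (orthonormal_extend ONs (P_scale a Pr) _ _)).
  - rewrite dotL2Zl // dotL2C dotL2Zl // mulrA -expr2 exprVn.
    by rewrite sqr_sqrtr ?ltW // mulVf ?gt_eqF.
  - by move=> k km; rewrite dotL2Zl ?r_orth ?mulr0 //; exact: cs.
move=> g; have /eqP := continuous_Rintegral_eq0 CG HH (continuous_mul cr cr)
  (fun x => sqr_ge0 (r x)) rr0 g.
by rewrite mulf_eq0 orbb /r mulN1r subr_eq0 => /eqP.
Qed.

Lemma sqr_le_kernel f : P f ->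
  forall g, f g ^+ 2 <= (\sum_(i < m) s i g ^+ 2) * dotL2 mu f f.
Proof.
move=> Pf g; have cf := P_continuous Pf.
have -> : dotL2 mu f f = \sum_(i < m) dotL2 mu f (s i) ^+ 2.
  transitivity (dotL2 mu (fun x => \sum_(i < m) dotL2 mu f (s i) * s i x) f).
    by apply: eq_Rintegral => x _; rewrite -orthonormal_expansion.
  by rewrite dotL2_suml //; apply: eq_bigr => i _; rewrite dotL2C expr2.
by rewrite (orthonormal_expansion Pf g) mulrC sqr_sum_mul_le.
Qed.

(* By invariance of [mu] the [s i \o mul h] are orthonormal, so
   [psi := sum_i s i (h g) * s i (h _)] has [||psi||^2 = psi g = K (h g)], and
   [sqr_le_kernel] for [psi] at [g] reads [K (h g)^2 <= K g * K (h g)]. *)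
Lemma kernel_mull_le h g :
  \sum_(i < m) s i (mul h g) ^+ 2 <= \sum_(i < m) s i g ^+ 2.
Proof.
pose t i x := s i (mul h x).
have ct i : continuous (t i) := P_continuous (P_mull h (Ps i)).
have dot_t (i j : 'I_m) : dotL2 mu (t i) (t j) = (i == j :> nat)%:R.
  rewrite -dot_s // /dotL2 /t.
  exact: (Rintegral_mull CG HH h (continuous_mul (@cs i) (@cs j))).
pose psi x := \sum_(i < m) t i g * t i x.
have Ppsi : P psi by apply: P_sum => i; exact: P_mull.
have cpsi := P_continuous Ppsi.
have psi_t (i : 'I_m) : dotL2 mu (t i) psi = t i g.
  rewrite dotL2C dotL2_suml //.
  under eq_bigr => j _ do rewrite dot_t.
  by rewrite sum_mul_delta.
have psi_norm : dotL2 mu psi psi = psi g.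
  by rewrite {1}/psi dotL2_suml //; apply: eq_bigr => i _; rewrite psi_t.
have -> : \sum_(i < m) s i (mul h g) ^+ 2 = psi g.
  by apply: eq_bigr => i _; rewrite expr2.
have := sqr_le_kernel Ppsi g; rewrite psi_norm.
have [psi_gt0|psi_le0 _] := ltP 0 (psi g); first by rewrite expr2 ler_pM2r.
by apply: le_trans psi_le0 _; apply: sumr_ge0 => i _; exact: sqr_ge0.
Qed.

(* [K g] is a lower bound of [K] by [kernel_mull_le], hence at most its mean [m]. *)
Lemma kernel_le_dim g : \sum_(i < m) s i g ^+ 2 <= D%:R.
Proof.
pose K x := \sum_(i < m) s i x ^+ 2.
have cK : continuous K.
  by apply: continuous_big => [|i _]; [exact: add_continuous | exact: continuous_exprn].
have K_mean : \int[mu]_x K x = m%:R.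
  rewrite Rintegral_sum_continuous // => [|i]; last exact: continuous_exprn.
  rewrite -[m in m%:R]card_ord -sumr_const; apply: eq_bigr => i _.
  transitivity (dotL2 mu (s i) (s i)); last by rewrite dot_s // eqxx.
  by apply: eq_Rintegral => x _; rewrite expr2.
have K_min x : K g <= K x by rewrite -(cg_mulgVK CG g x); exact: kernel_mull_le.
have := le_Rintegral_continuous mu cG (@cst_continuous _ _ (K g)) cK K_min.
rewrite Rintegral_cst_probability K_mean => /le_trans; apply.
by rewrite ler_nat; exact: orthonormal_le ONs.
Qed.

End MaximalFamily.

Lemma sqr_le_dim_dotL2 f h : P f -> f h ^+ 2 <= D%:R * dotL2 mu f f.
Proof.
move=> Pf; have [m [s [ONs s_max]]] := exists_maximal_orthonormal.
apply: le_trans (sqr_le_kernel ONs s_max Pf h) _.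
by rewrite ler_wpM2r ?dotL2_ge0 ?kernel_le_dim.
Qed.

End ReproducingKernel.

Lemma prod_sum_tuple (R : comPzSemiRingType) k n (F : 'I_k -> 'I_n -> R) :
  \prod_(j < k) \sum_(i < n) F j i =
  \sum_(t : k.-tuple 'I_n) \prod_(j < k) F j (tnth t j).
Proof.
rewrite bigA_distr_bigA /= (reindex (fun t : k.-tuple 'I_n => [ffun j => tnth t j])).
  by apply: eq_bigr => t _; apply: eq_bigr => j _; rewrite ffunE.
exists (fun f : {ffun 'I_k -> 'I_n} => [tuple f j | j < k]) => [t _|f _].
  by apply: eq_from_tnth => j; rewrite tnth_mktuple ffunE.
by apply/ffunP => j; rewrite ffunE tnth_mktuple.
Qed.

Definition tdot (R : realType) n k (a x : tensor_pow R n k) : R := \sum_t a t * x t.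

Lemma tdot_sumr (R : realType) n k (a : tensor_pow R n k) m (c : 'I_m -> R)
    (b : 'I_m -> tensor_pow R n k) :
  tdot a (\sum_(j < m) c j *: b j) = \sum_(j < m) c j * tdot a (b j).
Proof.
rewrite /tdot; under eq_bigr => t _ do rewrite sum_ffunE mulr_sumr.
rewrite exchange_big /=; apply: eq_bigr => j _; rewrite mulr_sumr.
by apply: eq_bigr => t _; rewrite ffunE mulrCA.
Qed.

Lemma tpow_mulmx (R : realType) n k (M : 'M[R]_n) (w : 'cV[R]_n) (t : k.-tuple 'I_n) :
  tpow k (M *m w) t =
  \sum_(t' : k.-tuple 'I_n) (\prod_(j < k) M (tnth t j) (tnth t' j)) * tpow k w t'.
Proof.
rewrite /tpow ffunE; under eq_bigr => j _ do rewrite mxE.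
by rewrite prod_sum_tuple; apply: eq_bigr => t' _; rewrite ffunE -big_split.
Qed.

Lemma linear_coord_sum (R : pzRingType) n (l : {linear 'cV[R]_n -> R^o})
    (w : 'cV[R]_n) :
  l w = \sum_(i < n) w i ord0 * l (delta_mx i ord0).
Proof.
rewrite {1}(matrix_sum_delta w) linear_sum; apply: eq_bigr => i _.
by rewrite big_ord1 linearZ.
Qed.

Section OrbitCoefficients.
Context (R : realType) (G : ptopologicalType) (mul : G -> G -> G) (e : G).
Context (n : nat) (rho : G -> 'M[R]_n) (v : 'cV[R]_n) (k : nat).
Hypothesis HA : cont_lin_action mul e rho.

Lemma continuous_orbit : continuous (fun g => rho g *m v).
Proof.
have [_ _ c] := HA; move=> g.
exact: (continuous_comp (cvg_pair cvg_id (cvg_cst v)) (c (g, v))).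
Qed.

Lemma continuous_orbit_coord i : continuous (fun g => (rho g *m v) i ord0).
Proof.
move=> g; have := @coord_continuous R n 1 i ord0 (rho g *m v).
exact: continuous_comp (@continuous_orbit g).
Qed.

Lemma continuous_linear_orbit (l : {linear 'cV[R]_n -> R^o}) :
  continuous (fun g => l (rho g *m v)).
Proof.
under eq_fun do rewrite linear_coord_sum.
apply: continuous_big => [|i _]; first exact: add_continuous.
by apply: continuous_mul; [exact: continuous_orbit_coord | exact: cst_continuous].
Qed.

Definition orbit_coefficient (f : G -> R) :=
  exists a : tensor_pow R n k, forall g, f g = tdot a (tact k rho g v).

Lemma orbit_coefficient_continuous f : orbit_coefficient f -> continuous f.
Proof.
move=> [a fE]; have -> : f = fun g =>
    \sum_t a t * \prod_(j < k) (rho g *m v) (tnth t j) ord0.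
  by apply/funext => g; rewrite fE; apply: eq_bigr => t _; rewrite ffunE.
apply: continuous_big => [|t _]; first exact: add_continuous.
apply: continuous_mul; first exact: cst_continuous.
apply: continuous_big => [|j _]; first exact: mul_continuous.
exact: continuous_orbit_coord.
Qed.

Lemma orbit_coefficient_lin f g c : orbit_coefficient f -> orbit_coefficient g ->
  orbit_coefficient (fun x => f x + c * g x).
Proof.
move=> [a fE] [b gE]; exists [ffun t => a t + c * b t] => x.
rewrite fE gE /tdot mulr_sumr -big_split /=; apply: eq_bigr => t _.
by rewrite !ffunE; ring.
Qed.

Lemma orbit_coefficient0 : orbit_coefficient (fun=> 0).
Proof. by exists 0 => x; rewrite /tdot big1 // => t _; rewrite ffunE mul0r. Qed.

(* Translating by [h] transposes the coefficient tensor by [rho h]^(x)k. *)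
Lemma orbit_coefficient_mull h f : orbit_coefficient f ->
  orbit_coefficient (fun x => f (mul h x)).
Proof.
move=> [a fE].
exists [ffun t' => \sum_t a t * \prod_(j < k) rho h (tnth t j) (tnth t' j)] => x.
have [rhoM _ _] := HA.
rewrite fE /tdot /tact rhoM -mulmxA.
under eq_bigr => t _ do rewrite tpow_mulmx mulr_sumr.
rewrite exchange_big /=; apply: eq_bigr => t' _.
by rewrite [X in _ = X * _]ffunE mulr_suml; apply: eq_bigr => t _; rewrite mulrA.
Qed.

Lemma orbit_coefficient_linear_exprn (l : {linear 'cV[R]_n -> R^o}) :
  orbit_coefficient (fun g => l (rho g *m v) ^+ k).
Proof.
pose c i := l (delta_mx i ord0).
exists [ffun t : k.-tuple 'I_n => \prod_(j < k) c (tnth t j)] => g.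
rewrite linear_coord_sum -[k in _ ^+ k]card_ord -prodr_const prod_sum_tuple.
apply: eq_bigr => t _; rewrite !ffunE -big_split /=.
by apply: eq_bigr => j _; rewrite mulrC.
Qed.

Section OrthonormalDimension.
Variable mu : probability (borel_of G) R.
Hypothesis cG : compact [set: G].

(* If [m > dim U], some nonzero combination [x] of the coefficient tensors
   of the family is orthogonal to [U], so [sum_i x_i s_i] vanishes on [G];
   pairing it with [s j0], [x j0 != 0], contradicts orthonormality. *)
Lemma orthonormal_orbit_le_dim (U : {vspace tensor_pow R n k}) :
  is_orbit_span rho v U ->
  forall m s, orthonormal mu orbit_coefficient m s -> (m <= \dim U)%N.
Proof.
move=> [vU _] m s [Ps dot_s]; have [a sE] := choice Ps.
rewrite leqNgt; apply/negP => dimU_lt_m.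
pose b := vbasis U.
pose M : 'M[R]_(m, \dim U) := \matrix_(i, j) tdot (a i) b`_j.
have /rowV0Pn [x /sub_kermxP xM x_neq0] : kermx M != 0.
  by rewrite -mxrank_eq0 mxrank_ker -lt0n subn_gt0 (leq_ltn_trans (rank_leq_col M)).
have [j0 xj0] : exists j0, x 0 j0 != 0.
  apply/existsP; rewrite -negb_forall; apply: contra x_neq0 => /forallP x0.
  by apply/eqP/rowP => j; rewrite mxE; apply/eqP.
have comb0 g : \sum_(i < m) x 0 i * s i g = 0.
  under eq_bigr => i _ do rewrite sE (coord_vbasis (vU g)) tdot_sumr mulr_sumr.
  rewrite exchange_big big1 // => j _.
  have xMj : \sum_(i < m) x 0 i * M i j = 0 by have /rowP/(_ j) := xM; rewrite !mxE.
  rewrite (eq_bigr (fun i => coord b j (tact k rho g v) * (x 0 i * M i j))) => [|i _].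
    by rewrite -mulr_sumr xMj mulr0.
  by rewrite mxE mulrCA.
have cs i : continuous (s i) := orbit_coefficient_continuous (Ps i).
have /= := dotL2_suml mu cG (index_enum 'I_m) (fun i => x 0 i)
  (F := fun i : 'I_m => s i) (fun i => cs i) (cs j0).
rewrite {1}/dotL2; under eq_Rintegral => g _ do rewrite comb0 mul0r.
rewrite Rintegral_cst_probability.
rewrite (eq_bigr (fun i : 'I_m => x 0 i * ((i : nat) == j0)%:R)) => [|i _]; last first.
  by rewrite dot_s.
rewrite sum_mul_delta (_ : Ordinal _ = j0); last exact: val_inj.
by move=> /esym/eqP; rewrite (negbTE xj0).
Qed.

End OrthonormalDimension.

End OrbitCoefficients.

Lemma expr2n_norm (R : realDomainType) (x : R) k : x ^+ (2 * k) = `|x| ^+ (2 * k).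
Proof. by rewrite -normrX ger0_norm // exprM exprn_ge0 // sqr_ge0. Qed.

Lemma powR_exprnK (R : realType) (a : R) N : 0 <= a -> (0 < N)%N ->
  powR (a ^+ N) N%:R^-1 = a.
Proof.
move=> a_ge0 N_gt0; rewrite -powR_mulrn // -powRrM mulfV ?powRr1 //.
by rewrite pnatr_eq0 -lt0n.
Qed.

Section SupNorm.
Context (R : realType) (T : pointedType) (f : T -> R).

Lemma sup_norm_le (M : R) : (forall x, `|f x| <= M) -> sup_norm f <= M.
Proof. by move=> fM; apply: ge_sup => [|_ [x _ <-]]; [exists `|f point|, point|]. Qed.

Lemma le_sup_norm (M : R) : (forall x, `|f x| <= M) -> forall x, `|f x| <= sup_norm f.
Proof.
move=> fM x; apply: sup_upper_bound; last by exists x.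
by split; [exists `|f x|, x | exists M => _ [y _ <-]].
Qed.

End SupNorm.

Section Norm2k.
Context (R : realType) (G : ptopologicalType) (mu : probability (borel_of G) R).
Variable k : nat.
Hypothesis k_gt0 : (0 < k)%N.

Let N_gt0 : (0 < 2 * k)%N. Proof. by rewrite muln_gt0. Qed.

Lemma norm2k_le_sup_norm (f : G -> R) : compact [set: G] -> continuous f ->
  norm2k mu k f <= sup_norm f.
Proof.
move=> cG cf; have [M fM] := continuous_bounded cG cf.
have fS := le_sup_norm fM.
have S_ge0 : 0 <= sup_norm f by apply: le_trans (fS point).
rewrite /norm2k -/(Rintegral _ _ _) -[leRHS](powR_exprnK S_ge0 N_gt0).
apply: ge0_ler_powR; rewrite ?nnegrE ?invr_ge0 ?ler0n ?exprn_ge0 //.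
  by apply: Rintegral_ge0 => g _; rewrite expr2n_norm exprn_ge0.
rewrite -[leRHS](Rintegral_cst_probability mu).
apply: le_Rintegral_continuous => //; first exact: continuous_exprn.
  exact: cst_continuous.
by move=> g; rewrite expr2n_norm lerXn2r ?nnegrE.
Qed.

Lemma abs_le_powR_norm2k (f : G -> R) (D : R) x : 0 <= D ->
  f x ^+ (2 * k) <= D * \int[mu]_g f g ^+ (2 * k) ->
  `|f x| <= powR D (2 * k)%:R^-1 * norm2k mu k f.
Proof.
move=> D_ge0 fx_le; have I_ge0 : 0 <= \int[mu]_g f g ^+ (2 * k).
  by apply: Rintegral_ge0 => g _; rewrite expr2n_norm exprn_ge0.
rewrite /norm2k -/(Rintegral _ _ _) -powRM //.
rewrite -[leLHS](powR_exprnK (normr_ge0 (f x)) N_gt0) -expr2n_norm.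
apply: ge0_ler_powR; rewrite ?nnegrE ?invr_ge0 ?ler0n ?mulr_ge0 //.
by rewrite expr2n_norm exprn_ge0.
Qed.

End Norm2k.

Unset Implicit Arguments.

Theorem corollary1p4 (R : realType) (G : ptopologicalType)
    (mul : G -> G -> G) (inv : G -> G) (e : G)
    (mu : probability (borel_of G) R) (n : nat) (rho : G -> 'M[R]_n)
    (v : 'cV[R]_n) (l : {linear 'cV[R]_n -> R^o}) (k : nat)
    (U : {vspace tensor_pow R n k}) :
  compact_group mul inv e ->
  haar_probability mul mu ->
  cont_lin_action mul e rho ->
  (0 < k)%N ->
  is_orbit_span rho v U ->
  let f := fun g : G => l (rho g *m v) in
  norm2k mu k f <= sup_norm f /\
  sup_norm f <= powR (\dim U)%:R ((2 * k)%:R^-1) * norm2k mu k f.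
Proof.
move=> CG HH HA k_gt0 HU f.
have cG := cg_compact CG.
have cf : continuous f := continuous_linear_orbit (v := v) HA (l := l).
split; first exact (norm2k_le_sup_norm mu k_gt0 cG cf).
apply: sup_norm_le => h; apply: (abs_le_powR_norm2k k_gt0) => //.
have := sqr_le_dim_dotL2 CG HH (orbit_coefficient_continuous HA)
  (@orbit_coefficient_lin _ _ _ rho v k) (orbit_coefficient0 rho v k)
  (orbit_coefficient_mull HA) (orthonormal_orbit_le_dim HA cG HU) h
  (orbit_coefficient_linear_exprn rho v k l).
rewrite -exprM mulnC /dotL2.
by under eq_Rintegral do rewrite -exprD addnn -mul2n.
Qed.
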